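(* Let $R$ be an abelian Rickart $*$-ring and $a,b\in R$ with $a\perp b$. Then, in the natural partial order, $a\wedge b=0$ and $a\vee b=a+b$.
   Context: A Rickart $*$-ring is a $*$-ring in which the right annihilator of every element is generated, as a right ideal, by a projection ($e=e^2=e^*$); it has unity. Abelian: all idempotents central. Natural partial order: $a\leq b$ iff there is $x\in R$ with $a=xa=xb=ax^*=bx^*$. Orthogonality: $a\perp b$ iff there is $x\in R$ with $xa=a=ax^*$ and $xb=0=bx^*$. *)

From mathcomp Require Import all_boot all_algebra.
Set Implicit Arguments. Unset Strict Implicit. Unset Printing Implicit Defensive.
Import GRing.Theory.
Local Open Scope ring_scope.

Definition star_ring_axioms (R : pzRingType) (s : R -> R) : Prop :=
  [/\ (forall x y : R, s (x + y) = s x + s y),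
      (forall x y : R, s (x * y) = s y * s x) &
      (forall x : R, s (s x) = x)].

Definition is_projection (R : pzRingType) (s : R -> R) (e : R) : Prop :=
  e * e = e /\ s e = e.

Definition rickart (R : pzRingType) (s : R -> R) : Prop :=
  forall x : R, exists e : R, is_projection s e /\
    (forall y : R, x * y = 0 <-> exists z : R, y = e * z).

Definition abelian_ring (R : pzRingType) : Prop :=
  forall e : R, e * e = e -> forall x : R, e * x = x * e.

Definition npo_le (R : pzRingType) (s : R -> R) (a b : R) : Prop :=
  exists x : R, [/\ x * a = a, x * b = a, a * s x = a & b * s x = a].

Definition orth (R : pzRingType) (s : R -> R) (a b : R) : Prop :=
  exists x : R, [/\ x * a = a, a * s x = a, x * b = 0 & b * s x = 0].

Definition is_meet (T : Type) (le : T -> T -> Prop) (a b m : T) : Prop :=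
  [/\ le m a, le m b & forall c, le c a -> le c b -> le c m].

Definition is_join (T : Type) (le : T -> T -> Prop) (a b j : T) : Prop :=
  [/\ le a j, le b j & forall c, le a c -> le b c -> le j c].

From mathcomp Require Import all_boot all_algebra.
Set Implicit Arguments. Unset Strict Implicit. Unset Printing Implicit Defensive.
Local Open Scope ring_scope.
Import GRing.Theory.

(* If x witnesses a _|_ b, then x fixes everything below a and kills
   everything below b, so the only common lower bound is 0.  For the join,
   every c has a right projection r_c (the least projection with c r_c = c,
   i.e. 1 - e where e R is the right annihilator of c), and a <= c forces
   r_a c = a.  In the abelian case r_a and r_b are central, and a _|_ b makes
   them orthogonal, so e := r_a + r_b is a central projection with
   e c = a + b; multiplying by a central projection moves down the order. *)

Definition right_proj (R : pzRingType) (s : R -> R) (c r : R) : Prop :=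
  [/\ is_projection s r, c * r = c & forall y, c * y = 0 -> r * y = 0].

Section NaturalOrder.
Variables (R : pzRingType) (s : R -> R).

Lemma orth_npo_le_eq0 (a b c : R) :
  orth s a b -> npo_le s c a -> npo_le s c b -> c = 0.
Proof.
move=> [x [xa _ xb _]] [y [_ _ _ asy]] [z [_ _ _ bsz]].
have xc : x * c = c by rewrite -asy mulrA xa.
by rewrite -xc -bsz mulrA xb mul0r.
Qed.

Lemma orth_npo_le_addl (a b : R) : orth s a b -> npo_le s a (a + b).
Proof.
move=> [x [xa asx xb bsx]]; exists x.
by rewrite mulrDr mulrDl xa xb asx bsx !addr0.
Qed.

End NaturalOrder.

Section StarRing.
Variables (R : pzRingType) (s : R -> R).
Hypothesis star_s : star_ring_axioms s.

Lemma star0 : s 0 = 0.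
Proof. by case: star_s => sD _ _; apply: (addrI (s 0)); rewrite -sD !addr0. Qed.

Lemma starN (y : R) : s (- y) = - s y.
Proof.
case: star_s => sD _ _; apply/eqP.
by rewrite -addr_eq0 -sD addNr star0.
Qed.

Lemma starB (y z : R) : s (y - z) = s y - s z.
Proof. by case: star_s => sD _ _; rewrite sD starN. Qed.

Lemma star1 : s 1 = 1.
Proof.
case: star_s => _ sM sK.
by have := sM (s 1) 1; rewrite !mulr1 !sK mulr1.
Qed.

Lemma npo_le0x (c : R) : npo_le s 0 c.
Proof. by exists 0; rewrite star0 !mulr0 mul0r. Qed.

Lemma orthC (a b : R) : orth s a b -> orth s b a.
Proof.
move=> [x [xa asx xb bsx]]; exists (1 - x).
by rewrite starB star1 !mulrBl !mulrBr !mul1r !mulr1 xa asx xb bsx !subrr !subr0.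
Qed.

Lemma orth_npo_le_addr (a b : R) : orth s a b -> npo_le s b (a + b).
Proof. by move/orthC/orth_npo_le_addl; rewrite addrC. Qed.

Lemma is_projection_add (e f : R) :
  is_projection s e -> is_projection s f -> e * f = 0 -> f * e = 0 ->
  is_projection s (e + f).
Proof.
case: star_s => sD _ _ [ee se] [ff sf] ef fe; split; last by rewrite sD se sf.
by rewrite mulrDl !mulrDr ee ff ef fe addr0 add0r.
Qed.

Lemma right_proj_fix (c r p : R) : right_proj s c r -> c * s p = c -> p * r = r.
Proof.
case: star_s => _ sM sK [[_ sr] _ ann] csp.
have : r * (1 - s p) = 0 by apply: ann; rewrite mulrBr mulr1 csp subrr.
rewrite mulrBr mulr1 => /eqP; rewrite subr_eq0 => /eqP rsp.
by rewrite -[RHS]sr [in RHS]rsp sM sK sr.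
Qed.

Lemma right_proj_ann (c r y : R) : right_proj s c r -> c * s y = 0 -> y * r = 0.
Proof.
case: star_s => _ sM sK [[_ sr] _ ann] /ann /(congr1 s).
by rewrite sM sK sr star0.
Qed.

Section Rickart.
Hypotheses (rickart_s : rickart s) (abelian_R : abelian_ring R).

Lemma exists_right_proj (c : R) : exists r, right_proj s c r.
Proof.
have [e [[ee se] ann]] := rickart_s c.
have ce : c * e = 0 by apply/ann; exists 1; rewrite mulr1.
exists (1 - e); split; first split.
- by rewrite mulrBl mul1r mulrBr mulr1 ee subrr subr0.
- by rewrite starB star1 se.
- by rewrite mulrBr mulr1 ce subr0.
- by move=> y /ann [z ->]; rewrite mulrBl mul1r mulrA ee subrr.
Qed.

Lemma npo_le_right_proj (c d r : R) :
  npo_le s c d -> right_proj s c r -> r * d = c.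
Proof.
move=> [p [pc pd csp _]] rc; have pr := right_proj_fix rc csp.
have [[rr _] cr _] := rc.
have rdc : r * (d - c) = 0.
  by rewrite -pr -(abelian_R rr p) -mulrA mulrBr pd pc subrr mulr0.
move: rdc; rewrite mulrBr => /eqP; rewrite subr_eq0 => /eqP ->.
by rewrite (abelian_R rr c) cr.
Qed.

Lemma orth_right_proj (a b ra rb : R) :
  orth s a b -> right_proj s a ra -> right_proj s b rb -> ra * rb = 0.
Proof.
move=> [x [_ asx _ bsx]] rpa rpb.
have [[rara _] _ _] := rpa.
have xra := right_proj_fix rpa asx.
have xrb := right_proj_ann rpb bsx.
by rewrite -xra -mulrA (abelian_R rara rb) mulrA xrb mul0r.
Qed.

Lemma npo_le_central_proj (e d : R) : is_projection s e -> npo_le s (e * d) d.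
Proof.
move=> [ee se]; exists e; rewrite se mulrA ee -mulrA -(abelian_R ee d).
by rewrite mulrA ee.
Qed.

End Rickart.
End StarRing.

Theorem mainTheorem9 (R : pzRingType) (s : R -> R) :
  star_ring_axioms s -> rickart s -> abelian_ring R ->
  forall a b : R, orth s a b ->
    is_meet (npo_le s) a b 0 /\ is_join (npo_le s) a b (a + b).
Proof.
move=> star_s rick ab a b ab_orth; split.
  split; [exact: npo_le0x | exact: npo_le0x |].
  by move=> c ca cb; rewrite (orth_npo_le_eq0 ab_orth ca cb); exact: npo_le0x.
split; [exact: orth_npo_le_addl | exact: orth_npo_le_addr |].
move=> c ac bc.
have [ra rpa] := exists_right_proj star_s rick a.
have [rb rpb] := exists_right_proj star_s rick b.
have [proj_a _ _] := rpa; have [proj_b _ _] := rpb.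
have rab : ra * rb = 0 := orth_right_proj star_s ab ab_orth rpa rpb.
have rba : rb * ra = 0 by rewrite -(ab _ proj_a.1).
have proj_e := is_projection_add star_s proj_a proj_b rab rba.
have <- : (ra + rb) * c = a + b.
  by rewrite mulrDl (npo_le_right_proj star_s ab ac rpa)
             (npo_le_right_proj star_s ab bc rpb).
exact: (npo_le_central_proj ab c proj_e).
Qed.
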